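(* Let $q$ be a prime power. Every outcome of the random graph $H_q^*$ is $K_4$-free.
   Context: $\mathcal H$ is the Hermitian unital $\{\langle x,y,z\rangle : x^{q+1}+y^{q+1}+z^{q+1}=0\}$ in the projective plane $\mathrm{PG}(2,q^2)$ (it has $q^3+1$ points and every line meets it in $1$ or $q+1$ points; lines meeting it in $q+1$ points are secants). $H_q$ is the graph on the set of secants, two distinct secants adjacent iff they meet in a point of $\mathcal H$. For $P\in\mathcal H$, $C_P$ is the set of secants through $P$ and $\mathcal C=\{C_P:P\in\mathcal H\}$. The random graph $H_q^*$ on vertex set $V(H_q)$ is defined as follows: for each $C\in\mathcal C$, independently over cliques and vertices, each vertex of $C$ is placed in $A_C$ or $B_C$ with probability $1/2$ each; $H_q^*$ is the union over $C\in\mathcal C$ of the complete bipartite graphs with parts $A_C$ and $B_C$. *)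

From HB Require Import structures.
From mathcomp Require Import all_boot all_order all_algebra.
Set Implicit Arguments. Unset Strict Implicit. Unset Printing Implicit Defensive.
Import GRing.Theory.
Local Open Scope ring_scope.

Section Hermitian.
Variables (F : finFieldType) (q : nat).

(* A projective point of PG(2,F) is the 1-dimensional subspace spanned by a
   nonzero vector, represented as a set of row vectors. *)
Definition span1 (v : 'rV[F]_3) : {set 'rV[F]_3} := [set c *: v | c : F].

Definition is_ppoint (X : {set 'rV[F]_3}) : bool :=
  [exists v : 'rV[F]_3, (v != 0) && (X == span1 v)].

Definition ppoint := {X : {set 'rV[F]_3} | is_ppoint X}.

(* incidence of a point with the line with coordinate vector a *)
Definition incid (a : 'rV[F]_3) (P : ppoint) : bool :=
  [forall v in val P, v *m a^T == 0].

Definition is_pline (L : {set ppoint}) : bool :=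
  [exists a : 'rV[F]_3, (a != 0) && (L == [set P | incid a P])].

Definition herm (v : 'rV[F]_3) : bool := \sum_(i < 3) v 0 i ^+ q.+1 == 0.

Definition onH (P : ppoint) : bool := [forall v in val P, herm v].

Definition secant (L : {set ppoint}) : bool :=
  is_pline L && (#|[set P in L | onH P]| == q.+1)%N.

(* An outcome of H_q^*: s P L says whether the secant L is in A_{C_P}
   (true) or B_{C_P} (false). *)
Definition adjStar (s : ppoint -> {set ppoint} -> bool) (L M : {set ppoint}) :=
  [exists P : ppoint, [&& onH P, P \in L, P \in M & s P L != s P M]].

End Hermitian.

Definition prime_power (q : nat) : Prop :=
  exists p k : nat, [/\ prime p, (0 < k)%N & q = (p ^ k)%N].

From HB Require Import structures.
From mathcomp Require Import all_boot all_order all_algebra.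
From mathcomp Require Import finfield ring.
Set Implicit Arguments. Unset Strict Implicit. Unset Printing Implicit Defensive.
Import GRing.Theory.
Local Open Scope ring_scope.

(* Four pairwise adjacent secants L1..L4 of an outcome of H_q^* come with six
   points Pij of the unital, Pij on Li and Lj, at which Li and Lj receive
   different colours.  A colouring argument (triangle_distinct) shows that the
   three points witnessing a triangle of secants are distinct: a common point
   would lie on three lines and would have to 2-colour them with pairwise
   distinct colours.  Hence the six points form an O'Nan configuration on the
   unital, which does not exist (no_onan). *)

Section Coordinates.
Variable F : fieldType.
Implicit Types (u v w x y z a b : 'rV[F]_3) (c d : F).

Lemma ord3_cases (i : 'I_3) : i = 0 \/ i = 1 \/ i = 2.
Proof.
case: i => [[|[|[|//]]] Hi]; [left | right; left | right; right]; exact: val_inj.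
Qed.

Lemma sum3 (g : 'I_3 -> F) : \sum_(i < 3) g i = g 0 + g 1 + g 2.
Proof.
rewrite !big_ord_recl big_ord0 addr0 addrA.
by congr (g _ + g _ + g _); apply: val_inj.
Qed.

Definition dot x a := x 0 0 * a 0 0 + x 0 1 * a 0 1 + x 0 2 * a 0 2.

Definition cross x y : 'rV[F]_3 :=
  \row_(k < 3) nth 0 [:: x 0 1 * y 0 2 - x 0 2 * y 0 1;
                         x 0 2 * y 0 0 - x 0 0 * y 0 2;
                         x 0 0 * y 0 1 - x 0 1 * y 0 0] k.

Definition det33 (a00 a01 a02 a10 a11 a12 a20 a21 a22 : F) : F :=
  a00 * (a11 * a22 - a12 * a21) - a01 * (a10 * a22 - a12 * a20)
  + a02 * (a10 * a21 - a11 * a20).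

Definition det3 x y z :=
  det33 (x 0 0) (x 0 1) (x 0 2) (y 0 0) (y 0 1) (y 0 2) (z 0 0) (z 0 1) (z 0 2).

Definition par x y := forall i j : 'I_3, x 0 i * y 0 j = x 0 j * y 0 i.

Lemma dotZ c x a : dot (c *: x) a = c * dot x a.
Proof. by rewrite /dot !mxE; ring. Qed.

Lemma dotZr c x a : dot x (c *: a) = c * dot x a.
Proof. by rewrite /dot !mxE; ring. Qed.

Lemma mulmx_dot x a : (x *m a^T == 0) = (dot x a == 0).
Proof.
have dotE : (x *m a^T) 0 0 = dot x a by rewrite !mxE sum3 !mxE.
apply/eqP/eqP => [/matrixP/(_ 0 0)|h]; first by rewrite dotE mxE.
by apply/matrixP => i j; rewrite (ord1 i) (ord1 j) dotE h mxE.
Qed.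

Lemma det3C x y z : det3 z x y = det3 x y z.
Proof. by rewrite /det3 /det33; ring. Qed.

Lemma det3N x y z : det3 y x z = - det3 x y z.
Proof. by rewrite /det3 /det33; ring. Qed.

Lemma nz_coord x : x != 0 -> exists k, x 0 k != 0.
Proof.
move=> nx; have [k hk|h] := pickP (fun k => x 0 k != 0); first by exists k.
case/eqP: nx; apply/matrixP => i j; rewrite (ord1 i) mxE.
by move: (h j) => /= /negbFE /eqP.
Qed.

Lemma par_sym x y : par x y -> par y x.
Proof. by move=> H i j; rewrite mulrC (H j i) mulrC. Qed.

Lemma par_scaler c x : par x (c *: x).
Proof. by move=> i j; rewrite !mxE; ring. Qed.

Lemma par_scale a b : a != 0 -> par a b -> exists c, b = c *: a.
Proof.
move=> na H; have [k hk] := nz_coord na.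
exists (b 0 k / a 0 k); apply/matrixP => i j; rewrite (ord1 i) !mxE.
by apply: (mulfI hk); rewrite H; field.
Qed.

Lemma par_trans x y z : z != 0 -> par x z -> par y z -> par x y.
Proof.
move=> nz Hx Hy; have [k hk] := nz_coord nz => i j.
apply: (mulfI (mulf_neq0 hk hk)).
transitivity ((x 0 i * z 0 k) * (y 0 j * z 0 k)); first by ring.
rewrite (Hx i k) (Hy j k).
transitivity ((x 0 j * z 0 k) * (y 0 i * z 0 k)); last by ring.
by rewrite (Hx j k) (Hy i k); ring.
Qed.

Lemma par_cases x y :
  x 0 1 * y 0 2 = x 0 2 * y 0 1 -> x 0 2 * y 0 0 = x 0 0 * y 0 2 ->
  x 0 0 * y 0 1 = x 0 1 * y 0 0 -> par x y.
Proof.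
move=> e0 e1 e2 i j.
case: (ord3_cases i) => [->|[->|->]]; case: (ord3_cases j) => [->|[->|->]] //;
  by [rewrite e0 | rewrite -e0 | rewrite e1 | rewrite -e1 | rewrite e2 | rewrite -e2].
Qed.

Lemma dot_cross_par x a b : dot x a = 0 -> dot x b = 0 -> par x (cross a b).
Proof.
move=> ha hb; apply: par_cases; apply/eqP; rewrite -subr_eq0 !mxE /=; apply/eqP.
- transitivity (a 0 0 * dot x b - b 0 0 * dot x a); first by rewrite /dot; ring.
  by rewrite ha hb; ring.
- transitivity (a 0 1 * dot x b - b 0 1 * dot x a); first by rewrite /dot; ring.
  by rewrite ha hb; ring.
- transitivity (a 0 2 * dot x b - b 0 2 * dot x a); first by rewrite /dot; ring.
  by rewrite ha hb; ring.
Qed.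

Lemma cross0_par a b : cross a b = 0 -> par a b.
Proof.
move/matrixP => H; have h0 := H 0 0; have h1 := H 0 1; have h2 := H 0 2.
rewrite !mxE /= in h0 h1 h2.
by apply: par_cases; apply/eqP; rewrite -subr_eq0; apply/eqP.
Qed.

Lemma common_perp_par x y a b :
  dot x a = 0 -> dot x b = 0 -> dot y a = 0 -> dot y b = 0 -> ~ par a b -> par x y.
Proof.
move=> h1 h2 h3 h4 npar.
have nc : cross a b != 0 by apply/eqP => /cross0_par.
exact: (par_trans nc (dot_cross_par h1 h2) (dot_cross_par h3 h4)).
Qed.

Lemma det3_mul_coord x y z a k : det3 x y z * a 0 k =
  dot x a * cross y z 0 k + dot y a * cross z x 0 k + dot z a * cross x y 0 k.
Proof.
by case: (ord3_cases k) => [->|[->|->]]; rewrite /det3 /det33 /dot !mxE /=; ring.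
Qed.

Lemma det3_perp0 x y z a : a != 0 -> dot x a = 0 -> dot y a = 0 -> dot z a = 0 ->
  det3 x y z = 0.
Proof.
move=> na hx hy hz; apply/eqP; apply: contraNT na => nd.
apply/eqP/matrixP => i j; rewrite (ord1 i) mxE.
by apply: (mulfI nd); rewrite mulr0 det3_mul_coord hx hy hz; ring.
Qed.

Lemma det3_eq0_perp x y z a : dot y a = 0 -> dot z a = 0 -> ~ par y z ->
  det3 x y z = 0 -> dot x a = 0.
Proof.
move=> hy hz npar hd.
have [k hk] : exists k, cross y z 0 k != 0.
  by apply: nz_coord; apply/eqP => /cross0_par.
have := det3_mul_coord x y z a k; rewrite hd hy hz !mul0r !addr0 => /esym/eqP.
by rewrite mulf_eq0 (negbTE hk) orbF => /eqP.
Qed.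

Lemma cramer x y z t : det3 x y z != 0 ->
  t = (det3 t y z / det3 x y z) *: x + (det3 x t z / det3 x y z) *: y
      + (det3 x y t / det3 x y z) *: z.
Proof.
move=> nd; apply/matrixP => i j; rewrite (ord1 i) !mxE.
by case: (ord3_cases j) => [->|[->|->]]; rewrite /det3 /det33 in nd *; field.
Qed.

Lemma on_side x y z t a : det3 x y z != 0 -> a != 0 ->
  dot y a = 0 -> dot z a = 0 -> dot t a = 0 -> exists c d, t = c *: y + d *: z.
Proof.
move=> nd na hy hz ht; exists (det3 x t z / det3 x y z), (det3 x y t / det3 x y z).
by rewrite {1}(cramer t nd) (det3_perp0 na ht hy hz) mul0r scale0r add0r.
Qed.

Lemma comb_neq0 t y z c d : t = c *: y + d *: z -> ~ par y t -> ~ par z t ->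
  c != 0 /\ d != 0.
Proof.
move=> ht nyt nzt; split; apply/eqP => c0.
- by apply: nzt; rewrite ht c0 scale0r add0r; apply: par_scaler.
- by apply: nyt; rewrite ht c0 scale0r addr0; apply: par_scaler.
Qed.

Lemma noncollinear x y z a b : ~ par a b ->
  dot y a = 0 -> dot z a = 0 -> dot x b = 0 -> dot z b = 0 ->
  ~ par z y -> ~ par z x -> det3 x y z != 0.
Proof.
move=> nab ya za xb zb nzy nzx; apply/eqP => hd.
have xa := det3_eq0_perp ya za (fun h => nzy (par_sym h)) hd.
by apply: nzx; apply: (common_perp_par za zb xa xb nab).
Qed.

End Coordinates.

Section Involution.
Variables (F : fieldType) (f : F -> F).
Hypothesis fD : forall a b, f (a + b) = f a + f b.
Hypothesis fM : forall a b, f (a * b) = f a * f b.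
Hypothesis fK : involutive f.
Implicit Types (u v w : 'rV[F]_3) (c d : F).

Lemma fmor0 : f 0 = 0.
Proof. by apply: (@addrI _ (f 0)); rewrite -fD !addr0. Qed.

Lemma fmorN a : f (- a) = - f a.
Proof. by apply/eqP; rewrite -subr_eq0 opprK -fD addNr fmor0. Qed.

Lemma fmor_neq0 a : a != 0 -> f a != 0.
Proof. by apply: contra => /eqP h; rewrite -[a]fK h fmor0. Qed.

Definition hform u v := u 0 0 * f (v 0 0) + u 0 1 * f (v 0 1) + u 0 2 * f (v 0 2).

Lemma hformC u v : f (hform u v) = hform v u.
Proof. by rewrite /hform !fD !fM !fK; ring. Qed.

Lemma hform_chord u v c d : hform u u = 0 -> hform v v = 0 ->
  hform (c *: u + d *: v) (c *: u + d *: v)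
  = c * f d * hform u v + d * f c * f (hform u v).
Proof.
move=> hu hv; rewrite hformC.
have -> : hform (c *: u + d *: v) (c *: u + d *: v) =
    c * f c * hform u u + d * f d * hform v v
    + c * f d * hform u v + d * f c * hform v u.
  by rewrite /hform !mxE !fD !fM; ring.
by rewrite hu hv; ring.
Qed.

Lemma gram_det3 u v w : det3 u v w * f (det3 u v w) =
  det33 (hform u u) (hform u v) (hform u w)
        (hform v u) (hform v v) (hform v w)
        (hform w u) (hform w v) (hform w w).
Proof. by rewrite /det3 /det33 /hform !(fD, fM, fmorN); ring. Qed.

Lemma det3_comb u v w c2 c3 d1 d3 e1 e2 :
  det3 (c2 *: v + c3 *: w) (d1 *: u + d3 *: w) (e1 *: u + e2 *: v)
  = (c2 * d3 * e1 + c3 * d1 * e2) * det3 u v w.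
Proof. by rewrite /det3 /det33 !mxE; ring. Qed.

(* Elimination step: the three chord conditions and the collinearity
   condition (together with its conjugate) force the Gram determinant to 0. *)
Lemma onan_elimination (x y z X Y Z c2 c3 d1 d3 e1 e2 C2 C3 D1 D3 E1 E2 : F) :
  c3 * C2 != 0 -> d3 * D1 != 0 -> e2 * E1 != 0 ->
  c2 * C3 * z + c3 * C2 * Z = 0 ->
  d1 * D3 * y + d3 * D1 * Y = 0 ->
  e1 * E2 * x + e2 * E1 * X = 0 ->
  c2 * d3 * e1 + c3 * d1 * e2 = 0 ->
  C2 * D3 * E1 + C3 * D1 * E2 = 0 ->
  x * z * Y + y * X * Z = 0.
Proof.
move=> n1 n2 n3 h1 h2 h3 h4 h5.
have E : (x * z * Y + y * X * Z) * ((c3 * C2) * (d3 * D1) * (e2 * E1)) =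
  x * z * (c3 * C2) * (e2 * E1) * (d1 * D3 * y + d3 * D1 * Y)
  + y * (d3 * D1) * ((c2 * C3 * z + c3 * C2 * Z) * (e1 * E2 * x + e2 * E1 * X)
        - (c2 * C3 * z + c3 * C2 * Z) * (e1 * E2 * x)
        - (c2 * C3 * z) * (e1 * E2 * x + e2 * E1 * X))
  + x * y * z * ((c2 * d3 * e1 + c3 * d1 * e2) * (C3 * D1 * E2)
        - (c3 * d1 * e2) * (C2 * D3 * E1 + C3 * D1 * E2)) by ring.
move: E; rewrite h1 h2 h3 h4 h5 => /eqP.
rewrite !(mul0r, mulr0, subr0, addr0) mulf_eq0.
by rewrite (negbTE (mulf_neq0 (mulf_neq0 n1 n2) n3)) orbF => /eqP.
Qed.

(* Algebraic form of the absence of O'Nan configurations: if the vertices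
   u, v, w of a triangle and a point x, y, z on each side (other than the
   vertices) lie on the unital and x, y, z are collinear, then the triangle
   is degenerate. *)
Lemma hermitian_no_onan u v w c2 c3 d1 d3 e1 e2 :
  c2 != 0 -> c3 != 0 -> d1 != 0 -> d3 != 0 -> e1 != 0 -> e2 != 0 ->
  hform u u = 0 -> hform v v = 0 -> hform w w = 0 ->
  hform (c2 *: v + c3 *: w) (c2 *: v + c3 *: w) = 0 ->
  hform (d1 *: u + d3 *: w) (d1 *: u + d3 *: w) = 0 ->
  hform (e1 *: u + e2 *: v) (e1 *: u + e2 *: v) = 0 ->
  det3 (c2 *: v + c3 *: w) (d1 *: u + d3 *: w) (e1 *: u + e2 *: v) = 0 ->
  det3 u v w = 0.
Proof.
move=> nc2 nc3 nd1 nd3 ne1 ne2 hu hv hw hx hy hz.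
have [//|nD] := eqVneq (det3 u v w) 0.
rewrite det3_comb => /eqP; rewrite mulf_eq0 (negbTE nD) orbF => /eqP h4.
have h5 : f c2 * f d3 * f e1 + f c3 * f d1 * f e2 = 0.
  by rewrite -!fM -fD h4 fmor0.
rewrite hform_chord // in hx; rewrite hform_chord // in hy.
rewrite hform_chord // in hz.
have nf c d : c != 0 -> d != 0 -> c * f d != 0.
  by move=> nc nd; rewrite mulf_neq0 ?fmor_neq0.
have K := onan_elimination (nf _ _ nc3 nc2) (nf _ _ nd3 nd1) (nf _ _ ne2 ne1)
  hx hy hz h4 h5.
move: (gram_det3 u v w); rewrite hu hv hw -!(hformC u) -(hformC v w).
rewrite /det33 !(mul0r, mulr0, subr0, sub0r, add0r, addr0) mulrN opprK !mulrA K.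
by move/eqP; rewrite mulf_eq0 (negbTE nD) (negbTE (fmor_neq0 nD)).
Qed.

End Involution.

Section ProjectivePlane.
Variable F : finFieldType.
Implicit Types (P Q : ppoint F) (L M : {set ppoint F}) (a b : 'rV[F]_3).

Definition rep P : 'rV[F]_3 := xchoose (elimT existsP (valP P)).

Lemma rep_spec P : (rep P != 0) && (val P == span1 (rep P)).
Proof. exact: (xchooseP (elimT existsP (valP P))). Qed.

Lemma rep_neq0 P : rep P != 0.
Proof. by case/andP: (rep_spec P). Qed.

Lemma repE P : val P = span1 (rep P).
Proof. by case/andP: (rep_spec P) => _ /eqP. Qed.

Lemma in_span1 (p : 'rV[F]_3) : p \in span1 p.
Proof. by apply/imsetP; exists 1; rewrite ?inE // scale1r. Qed.

Lemma incidE a P : incid a P = (dot (rep P) a == 0).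
Proof.
apply/forallP/idP => [/(_ (rep P))|h v]; first by rewrite repE in_span1 mulmx_dot.
apply/implyP; rewrite repE => /imsetP [c _ ->].
by rewrite mulmx_dot dotZ (eqP h) mulr0.
Qed.

Lemma par_rep P Q : par (rep P) (rep Q) -> P = Q.
Proof.
move=> hpar; have [c hc] := par_scale (rep_neq0 P) hpar.
have nc : c != 0 by apply: contraNneq (rep_neq0 Q) => c0; rewrite hc c0 scale0r.
apply: val_inj; rewrite !repE hc; apply/setP => t.
apply/imsetP/imsetP => [[d _ ->]|[d _ ->]].
  by exists (d / c); rewrite ?inE // scalerA divfK.
by exists (d * c); rewrite ?inE // scalerA.
Qed.

Lemma npar_rep P Q : P != Q -> ~ par (rep P) (rep Q).
Proof. by move=> nPQ /par_rep ePQ; rewrite ePQ eqxx in nPQ. Qed.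

Lemma plineP L : is_pline L -> exists2 a, a != 0 & L = [set P | incid a P].
Proof. by case/existsP => a /andP [na /eqP ->]; exists a. Qed.

Lemma npar_line a b : a != 0 -> b != 0 ->
  [set P | incid a P] != [set P | incid b P] -> ~ par a b.
Proof.
move=> na nb nab hpar; have [c hc] := par_scale na hpar; case/eqP: nab.
have nc : c != 0 by apply: contraNneq nb => c0; rewrite hc c0 scale0r.
by apply/setP => P; rewrite !inE !incidE hc dotZr mulf_eq0 (negbTE nc).
Qed.

Lemma meet_once L M P Q : is_pline L -> is_pline M -> L != M ->
  P \in L -> P \in M -> Q \in L -> Q \in M -> P = Q.
Proof.
move=> /plineP [a na ->] /plineP [b nb ->] /(npar_line na nb) nab.
rewrite !inE !incidE => /eqP PL /eqP PM /eqP QL /eqP QM.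
exact/par_rep/(common_perp_par PL PM QL QM nab).
Qed.

Definition meets_at P L M := (P \in L) && (P \in M).

Section Colouring.
Variable s : ppoint F -> {set ppoint F} -> bool.

(* In a triangle of pairwise adjacent secants of an outcome of H_q^*, the three
   witnessing points are pairwise distinct: a common point would lie on all
   three lines and would then have to 2-colour them with pairwise distinct
   colours. *)
Lemma triangle_distinct Li Lj Lk Pij Pik Pjk :
  is_pline Li -> is_pline Lj -> is_pline Lk ->
  Li != Lj -> Li != Lk -> Lj != Lk ->
  meets_at Pij Li Lj -> meets_at Pik Li Lk -> meets_at Pjk Lj Lk ->
  s Pij Li != s Pij Lj -> s Pik Li != s Pik Lk -> s Pjk Lj != s Pjk Lk ->
  [/\ Pij != Pik, Pij != Pjk & Pik != Pjk].
Proof.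
move=> li lj lk nij nik njk /andP[ij_i ij_j] /andP[ik_i ik_k] /andP[jk_j jk_k].
move=> cij cik cjk.
have concurrent R : R \in Li -> R \in Lj -> R \in Lk -> False.
  move=> Ri Rj Rk.
  have ER : Pij = R := meet_once li lj nij ij_i ij_j Ri Rj; subst R.
  have Eik : Pik = Pij := meet_once li lk nik ik_i ik_k Ri Rk.
  have Ejk : Pjk = Pij := meet_once lj lk njk jk_j jk_k Rj Rk.
  rewrite Eik in cik; rewrite Ejk in cjk.
  by move: cij cik cjk; case: (s Pij Li); case: (s Pij Lj); case: (s Pij Lk).
split; apply/eqP => E.
- by apply: (concurrent Pij); rewrite // E.
- by apply: (concurrent Pij); rewrite // E.
- by apply: (concurrent Pik); rewrite // E.
Qed.

End Colouring.

End ProjectivePlane.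

Section Unital.
Variables (F : finFieldType) (q : nat).
Hypotheses (q_pp : prime_power q) (cardF : #|F| = (q ^ 2)%N).

Lemma frobD (x y : F) : (x + y) ^+ q = x ^+ q + y ^+ q.
Proof.
case: q_pp cardF => p [k [pp k0 ->]] hF; apply: exprDn_pchar.
have hc : p \in [pchar F].
  by apply: (@card_finPcharP F p (k * 2)) => //; rewrite hF -expnM.
by rewrite pnatX (pnatE _ pp) hc.
Qed.

Lemma frobM (x y : F) : (x * y) ^+ q = x ^+ q * y ^+ q.
Proof. exact: exprMn. Qed.

Lemma frobK : involutive (fun x : F => x ^+ q).
Proof.
move=> x /=; rewrite -exprM.
have -> : (q * q)%N = #|F| by rewrite cardF expnS expn1.
exact: expf_card.
Qed.

Lemma onH_rep (P : ppoint F) :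
  onH q P -> hform (fun x => x ^+ q) (rep P) (rep P) = 0.
Proof.
move/forallP/(_ (rep P))/implyP; rewrite repE in_span1 => /(_ isT).
by rewrite /herm sum3 /hform !exprS => /eqP.
Qed.

(* The triangle P23 P13 P12 (sides L1, L2, L3) is nondegenerate,
   L4 cuts its sides at P14, P24, P34 away from the vertices, and
   hermitian_no_onan forbids all six points lying on the unital. *)
Lemma no_onan (L1 L2 L3 L4 : {set ppoint F}) (P12 P13 P14 P23 P24 P34 : ppoint F) :
  is_pline L1 -> is_pline L2 -> is_pline L3 -> is_pline L4 -> L1 != L2 ->
  meets_at P12 L1 L2 -> meets_at P13 L1 L3 -> meets_at P14 L1 L4 ->
  meets_at P23 L2 L3 -> meets_at P24 L2 L4 -> meets_at P34 L3 L4 ->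
  onH q P12 -> onH q P13 -> onH q P14 -> onH q P23 -> onH q P24 -> onH q P34 ->
  P12 != P13 -> P12 != P23 -> P12 != P14 -> P13 != P14 ->
  P12 != P24 -> P23 != P24 -> P13 != P34 -> P23 != P34 -> False.
Proof.
move=> /plineP[a1 na1 ->] /plineP[a2 na2 ->] /plineP[a3 na3 ->] /plineP[a4 na4 ->].
move=> /(npar_line na1 na2) n12; rewrite /meets_at !inE !incidE.
move=> /andP[/eqP w1 /eqP w2] /andP[/eqP v1 /eqP v3] /andP[/eqP x1 /eqP x4].
move=> /andP[/eqP u2 /eqP u3] /andP[/eqP y2 /eqP y4] /andP[/eqP z3 /eqP z4].
move=> /onH_rep hw /onH_rep hv /onH_rep hx /onH_rep hu /onH_rep hy /onH_rep hz.
move=> /npar_rep nwv /npar_rep nwu /npar_rep nwx /npar_rep nvx.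
move=> /npar_rep nwy /npar_rep nuy /npar_rep nvz /npar_rep nuz.
have nD := noncollinear n12 v1 w1 u2 w2 nwv nwu.
have [c2 [c3 ex]] := on_side nD na1 v1 w1 x1.
have [d1 [d3 ey]] : exists d1 d3, rep P24 = d1 *: rep P23 + d3 *: rep P12.
  by apply: (on_side (x := rep P13) _ na2 u2 w2 y2); rewrite det3N oppr_eq0.
have [e1 [e2 ez]] : exists e1 e2, rep P34 = e1 *: rep P23 + e2 *: rep P13.
  by apply: (on_side (x := rep P12) _ na3 u3 v3 z3); rewrite det3C.
have [nc2 nc3] := comb_neq0 ex nvx nwx.
have [nd1 nd3] := comb_neq0 ey nuy nwy.
have [ne1 ne2] := comb_neq0 ez nuz nvz.
case/eqP: nD; apply: (hermitian_no_onan frobD frobM frobK nc2 nc3 nd1 nd3 ne1 ne2);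
  rewrite -?ex -?ey -?ez //.
exact: det3_perp0 na4 x4 y4 z4.
Qed.

End Unital.

Lemma adjStarP (F : finFieldType) (q : nat) (s : ppoint F -> {set ppoint F} -> bool)
    (L M : {set ppoint F}) :
  adjStar q s L M -> exists P, [/\ onH q P, meets_at P L M & s P L != s P M].
Proof. by case/existsP => P /and4P[oP PL PM cP]; exists P; rewrite /meets_at PL PM. Qed.

Theorem mainTheorem7 (F : finFieldType) (q : nat) :
  prime_power q -> #|F| = (q ^ 2)%N ->
  forall (s : ppoint F -> {set ppoint F} -> bool)
         (L1 L2 L3 L4 : {set ppoint F}),
    secant q L1 -> secant q L2 -> secant q L3 -> secant q L4 ->
    uniq [:: L1; L2; L3; L4] ->
    ~ (adjStar q s L1 L2 /\ adjStar q s L1 L3 /\ adjStar q s L1 L4 /\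
       adjStar q s L2 L3 /\ adjStar q s L2 L4 /\ adjStar q s L3 L4).
Proof.
move=> q_pp cardF s L1 L2 L3 L4 /andP[l1 _] /andP[l2 _] /andP[l3 _] /andP[l4 _].
rewrite /= !inE !negb_or.
move=> /andP[/and3P[n12 n13 n14] /andP[/andP[n23 n24] /andP[n34 _]]].
case=> /adjStarP[P12 [o12 m12 c12]] [/adjStarP[P13 [o13 m13 c13]]].
case=> /adjStarP[P14 [o14 m14 c14]] [/adjStarP[P23 [o23 m23 c23]]].
case=> /adjStarP[P24 [o24 m24 c24]] /adjStarP[P34 [o34 m34 c34]].
have [d12_13 d12_23 _] := triangle_distinct l1 l2 l3 n12 n13 n23 m12 m13 m23 c12 c13 c23.
have [d12_14 d12_24 _] := triangle_distinct l1 l2 l4 n12 n14 n24 m12 m14 m24 c12 c14 c24.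
have [d13_14 d13_34 _] := triangle_distinct l1 l3 l4 n13 n14 n34 m13 m14 m34 c13 c14 c34.
have [d23_24 d23_34 _] := triangle_distinct l2 l3 l4 n23 n24 n34 m23 m24 m34 c23 c24 c34.
exact: (no_onan q_pp cardF l1 l2 l3 l4 n12 m12 m13 m14 m23 m24 m34
          o12 o13 o14 o23 o24 o34 d12_13 d12_23 d12_14 d13_14 d12_24 d23_24
          d13_34 d23_34).
Qed.
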